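(* Let $X$ be a biquandle in which $a\uparrow(b\downarrow c)=a\uparrow b$, $a\Uparrow(b\downarrow c)=a\Uparrow b$, $a\downarrow(b\uparrow c)=a\downarrow b$ and $a\Downarrow(b\uparrow c)=a\Downarrow b$ hold for all $a,b,c\in X$. Then: (1) for all $a,b,c\in X$: $a\uparrow(b\downarrow c)=a\uparrow(b\Downarrow c)=a\uparrow b$, $a\Uparrow(b\downarrow c)=a\Uparrow(b\Downarrow c)=a\Uparrow b$, $a\downarrow(b\uparrow c)=a\downarrow(b\Uparrow c)=a\downarrow b$, $a\Downarrow(b\uparrow c)=a\Downarrow(b\Uparrow c)=a\Downarrow b$; (2) for all $a,b\in X$: $(a\uparrow b)\Uparrow b=(a\Uparrow b)\uparrow b=(a\downarrow b)\Downarrow b=(a\Downarrow b)\downarrow b=a$; (3) every up-type operation commutes with every down-type operation: for all $a,b,c\in X$, $(a\uparrow b)\downarrow c=(a\downarrow c)\uparrow b$, $(a\Uparrow b)\downarrow c=(a\downarrow c)\Uparrow b$, $(a\uparrow b)\Downarrow c=(a\Downarrow c)\uparrow b$, $(a\Uparrow b)\Downarrow c=(a\Downarrow c)\Uparrow b$; (4) for all $a,b,c\in X$: $a\uparrow(b\uparrow c)=((a\Uparrow c)\uparrow b)\uparrow c$ and $a\downarrow(b\downarrow c)=((a\Downarrow c)\downarrow b)\downarrow c$.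
   Context: A biquandle is a set $B$ with two binary operations $\uparrow$ (up) and $\downarrow$ (down), $B$ closed under them, such that: (1) for every $a\in B$ the maps $f_a(x)=x\uparrow a$, $g_a(x)=x\downarrow a$ are bijections $B\to B$, and $S\colon B\times B\to B\times B$, $S(x,y)=(y\downarrow x,\ x\uparrow y)$, is a bijection; (2) for every $a\in B$, $f_a^{-1}(a)=a\downarrow f_a^{-1}(a)$ and $g_a^{-1}(a)=a\uparrow g_a^{-1}(a)$; (3) for all $a,b,c\in B$: $(a\uparrow b)\uparrow c=(a\uparrow(c\downarrow b))\uparrow(b\uparrow c)$; $(a\downarrow b)\uparrow(c\downarrow(b\uparrow a))=(a\uparrow c)\downarrow(b\uparrow(c\downarrow a))$; $(a\downarrow b)\downarrow c=(a\downarrow(c\uparrow b))\downarrow(b\downarrow c)$. The up-bar and down-bar operations $\Uparrow,\Downarrow$ are defined by $S^{-1}(a,b)=(b\Uparrow a,\ a\Downarrow b)$. *)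

From mathcomp Require Import ssreflect ssrfun ssrbool.

Definition bqS {B : Type} (up down : B -> B -> B) (p : B * B) : B * B :=
  (down p.2 p.1, up p.1 p.2).

Definition is_biquandle {B : Type} (up down : B -> B -> B) : Prop :=
  (forall a : B, bijective (fun x => up x a)) /\
  (forall a : B, bijective (fun x => down x a)) /\
  bijective (bqS up down) /\
  (* (2) f_a^{-1}(a) = a ↓ f_a^{-1}(a) and g_a^{-1}(a) = a ↑ g_a^{-1}(a);
     since f_a, g_a are bijections, f_a^{-1}(a) is the unique x with x ↑ a = a *)
  (forall a x : B, up x a = a -> x = down a x) /\
  (forall a x : B, down x a = a -> x = up a x) /\
  (forall a b c : B, up (up a b) c = up (up a (down c b)) (up b c)) /\
  (forall a b c : B,
      up (down a b) (down c (up b a)) = down (up a c) (up b (down c a))) /\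
  (forall a b c : B, down (down a b) c = down (down a (up c b)) (down b c)).

Definition bqSinv {B : Type} (upbar downbar : B -> B -> B) (p : B * B) : B * B :=
  (upbar p.2 p.1, downbar p.1 p.2).

Definition are_bar_ops {B : Type} (up down upbar downbar : B -> B -> B) : Prop :=
  cancel (bqS up down) (bqSinv upbar downbar) /\
  cancel (bqSinv upbar downbar) (bqS up down).

From mathcomp Require Import ssreflect ssrfun ssrbool.

(** The hypotheses make [b ↓ c] invisible to the second argument of [↑] and
   [⇑].  Since [S^-1 (S (x, y)) = (x, y)] gives [(x ↑ y) ⇑ (y ↓ x) = x], this
   absorption collapses it to [(x ↑ y) ⇑ y = x]: [⇑ y] inverts [↑ y], and
   dually [⇓ y] inverts [↓ y].  As [↓ c] is onto, every [b] is some [y ↓ c]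
   with [b ⇓ c = y], so [⇓ c] is absorbed as well.  With all second-argument
   dependencies gone, the mixed Yang-Baxter axiom reduces to the commutation
   [(a ↑ b) ↓ c = (a ↓ c) ↑ b], the other two reduce to (4), and the barred
   variants follow by cancelling. *)

Section BiquandleWithAbsorption.

Context {B : Type} {up down upbar downbar : B -> B -> B}.

(* Declared first, so that outside the section [(lemma barK)] fixes all four
   operations and leaves the remaining hypotheses as side goals. *)
Hypothesis barK : cancel (bqS up down) (bqSinv upbar downbar).
Hypothesis barKV : cancel (bqSinv upbar downbar) (bqS up down).
Hypothesis up_bij : forall a : B, bijective (fun x => up x a).
Hypothesis down_bij : forall a : B, bijective (fun x => down x a).

Hypothesis up_down : forall a b c : B, up a (down b c) = up a b.
Hypothesis upbar_down : forall a b c : B, upbar a (down b c) = upbar a b.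
Hypothesis down_up : forall a b c : B, down a (up b c) = down a b.
Hypothesis downbar_up : forall a b c : B, downbar a (up b c) = downbar a b.

Lemma upK b : cancel (up^~ b) (upbar^~ b).
Proof.
move=> a; rewrite -(upbar_down _ _ a).
exact (congr1 fst (barK (a, b))).
Qed.

Lemma downK b : cancel (down^~ b) (downbar^~ b).
Proof.
move=> a; rewrite -(downbar_up _ _ a).
exact (congr1 snd (barK (b, a))).
Qed.

Lemma up_downbar a b c : up a (downbar b c) = up a b.
Proof. by have [d _ dK] := down_bij c; rewrite -[b]dK downK up_down. Qed.

Lemma upbar_downbar a b c : upbar a (downbar b c) = upbar a b.
Proof. by have [d _ dK] := down_bij c; rewrite -[b]dK downK upbar_down. Qed.

Lemma down_upbar a b c : down a (upbar b c) = down a b.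
Proof. by have [u _ uK] := up_bij c; rewrite -[b]uK upK down_up. Qed.

Lemma downbar_upbar a b c : downbar a (upbar b c) = downbar a b.
Proof. by have [u _ uK] := up_bij c; rewrite -[b]uK upK downbar_up. Qed.

Lemma upbarK b : cancel (upbar^~ b) (up^~ b).
Proof.
by move=> a; have := congr1 snd (barKV (b, a)); rewrite /= up_downbar.
Qed.

Lemma downbarK b : cancel (downbar^~ b) (down^~ b).
Proof.
by move=> a; have := congr1 fst (barKV (a, b)); rewrite /= down_upbar.
Qed.

Hypothesis yb_up : forall a b c : B,
  up (up a b) c = up (up a (down c b)) (up b c).
Hypothesis yb_mixed : forall a b c : B,
  up (down a b) (down c (up b a)) = down (up a c) (up b (down c a)).
Hypothesis yb_down : forall a b c : B,
  down (down a b) c = down (down a (up c b)) (down b c).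

Lemma up_downC a b c : down (up a b) c = up (down a c) b.
Proof. by have := yb_mixed a c b; rewrite up_down down_up. Qed.

Lemma upbar_downC a b c : down (upbar a b) c = upbar (down a c) b.
Proof. by apply: (can_inj (upK b)); rewrite /= -up_downC !upbarK. Qed.

Lemma up_downbarC a b c : downbar (up a b) c = up (downbar a c) b.
Proof. by apply: (can_inj (downK c)); rewrite /= up_downC !downbarK. Qed.

Lemma upbar_downbarC a b c : downbar (upbar a b) c = upbar (downbar a c) b.
Proof. by apply: (can_inj (downK c)); rewrite /= upbar_downC !downbarK. Qed.

Lemma up_up a b c : up a (up b c) = up (up (upbar a c) b) c.
Proof. by rewrite yb_up up_down upbarK. Qed.

Lemma down_down a b c : down a (down b c) = down (down (downbar a c) b) c.
Proof. by rewrite yb_down down_up downbarK. Qed.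

End BiquandleWithAbsorption.

Theorem mainTheorem8 (B : Type) (up down upbar downbar : B -> B -> B) :
  is_biquandle up down ->
  are_bar_ops up down upbar downbar ->
  (forall a b c : B, up a (down b c) = up a b) ->
  (forall a b c : B, upbar a (down b c) = upbar a b) ->
  (forall a b c : B, down a (up b c) = down a b) ->
  (forall a b c : B, downbar a (up b c) = downbar a b) ->
  (* (1) *)
  (forall a b c : B,
      up a (down b c) = up a (downbar b c) /\ up a (downbar b c) = up a b /\
      upbar a (down b c) = upbar a (downbar b c) /\ upbar a (downbar b c) = upbar a b /\
      down a (up b c) = down a (upbar b c) /\ down a (upbar b c) = down a b /\
      downbar a (up b c) = downbar a (upbar b c) /\ downbar a (upbar b c) = downbar a b) /\
  (* (2) *)
  (forall a b : B,
      upbar (up a b) b = up (upbar a b) b /\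
      up (upbar a b) b = downbar (down a b) b /\
      downbar (down a b) b = down (downbar a b) b /\
      down (downbar a b) b = a) /\
  (* (3) *)
  (forall a b c : B,
      down (up a b) c = up (down a c) b /\
      down (upbar a b) c = upbar (down a c) b /\
      downbar (up a b) c = up (downbar a c) b /\
      downbar (upbar a b) c = upbar (downbar a c) b) /\
  (* (4) *)
  (forall a b c : B,
      up a (up b c) = up (up (upbar a c) b) c /\
      down a (down b c) = down (down (downbar a c) b) c).
Proof.
move=> [up_bij [down_bij [_ [_ [_ [yb_up [yb_mixed yb_down]]]]]]] [barK barKV].
move=> up_down upbar_down down_up downbar_up.
split; [|split; [|split]] => a b.
- move=> c; rewrite up_down upbar_down down_up downbar_up.
  rewrite !(up_downbar barK) // !(upbar_downbar barK) //.
  by rewrite !(down_upbar barK) // !(downbar_upbar barK).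
- by rewrite (upK barK) // (upbarK barK) // (downK barK) // (downbarK barK).
- move=> c; rewrite up_downC // (upbar_downC barK) // (up_downbarC barK) //.
  by rewrite (upbar_downbarC barK).
- by move=> c; rewrite (up_up barK) // (down_down barK).
Qed.
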